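(* Let $A[0],\dots,A[m-1]$ and $B[0],\dots,B[n-1]$ be arrays of elements whose keys are totally preordered by $\leq$, each array sorted so that $A[j-1]\leq A[j]$ for $1\leq j<m$ and $B[k-1]\leq B[k]$ for $1\leq k<n$. Let $C=\mathsf{stable\_merge}(A,B,\leq)$. Then for every $i$ with $0\leq i<m+n$ there exist a unique $j$ with $0\leq j\leq m$ and a unique $k$ with $0\leq k\leq n$ such that $j+k=i$ and (1) $j=0$ or $A[j-1]\leq B[k]$, and (2) $k=0$ or $B[k-1]<A[j]$. Moreover these $j,k$ satisfy $\mathsf{stable\_merge}(A[0,\ldots,j-1],B[0,\ldots,k-1],\leq)=C[0,\ldots,i-1]$.
   Context: Arrays are indexed from $0$. By convention $A[-1]=B[-1]=-\infty$ and $A[m]=B[n]=+\infty$ (sentinels, not stored), so that expressions such as $A[m]$ or $B[n]$ in the conditions are meaningful. $\mathsf{stable\_merge}(X,Y,\leq)$ denotes the sorted (with respect to $\leq$ on keys) sequence consisting of all elements of $X$ and $Y$ in which the relative order of elements is stable: elements of $X$ keep their relative order, elements of $Y$ keep their relative order, and whenever an element of $X$ and an element of $Y$ have equal keys, the element of $X$ comes first. For an output position $i$, the indices $j,k$ are called the co-ranks of the rank $i$. *)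

From mathcomp Require Import all_boot.
Set Implicit Arguments. Unset Strict Implicit. Unset Printing Implicit Defensive.

(* stable_merge X Y le: the standard stable merge; on ties (x <= y) the
   element of X comes first.  This is MathComp's [path.merge]. *)
Definition stable_merge (T : Type) (le : rel T) (X Y : seq T) : seq T :=
  path.merge le X Y.

(* Condition (1):  j = 0  or  A[j-1] <= B[k], with the sentinel B[n] = +oo. *)
Definition corank_cond1 (T : Type) (le : rel T) (A B : seq T) (j k : nat) : Prop :=
  j = 0 \/
  (forall a b, onth A j.-1 = Some a -> onth B k = Some b -> le a b).

(* Condition (2):  k = 0  or  B[k-1] < A[j], with the sentinel A[m] = +oo;
   in a total preorder, B[k-1] < A[j] means ~ (A[j] <= B[k-1]). *)
Definition corank_cond2 (T : Type) (le : rel T) (A B : seq T) (j k : nat) : Prop :=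
  k = 0 \/
  (forall b a, onth B k.-1 = Some b -> onth A j = Some a -> ~~ le a b).

From mathcomp Require Import all_boot zify.

(* If the merge of A and B starts with the head of A
   (resp. B), the co-ranks of i+1 are those of i for the tails, shifted by one
   in j (resp. k), and the merge of the prefixes starts with the same element.
   Uniqueness: if (j, k) and (j', k') are co-ranks of i with j < j', then
   k' < k and A[j] <= A[j'-1] <= B[k'] <= B[k-1] < A[j]. *)

Lemma onth_lt_size (T : Type) (s : seq T) n :
  n < size s -> exists x, onth s n = Some x.
Proof. by rewrite -onthTE; case: onth => [x|] // _; exists x. Qed.

Section CoRanks.

Context {T : Type} {le : rel T}.
Hypotheses (le_total : total le) (le_trans : transitive le).

Let le_refl : reflexive le.
Proof. by move=> x; have := le_total x x; rewrite orbb. Qed.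

Lemma sorted_onth_le {s : seq T} {i j x y} : sorted le s -> i <= j ->
  onth s i = Some x -> onth s j = Some y -> le x y.
Proof.
move=> ss ij six sjy.
have ltj : j < size s by rewrite -onthTE sjy.
rewrite -(onth_nth x _ _ _ six) -(onth_nth x _ _ _ sjy).
by apply: sorted_leq_nth => //; rewrite inE; lia.
Qed.

Lemma merge_take_consl a b (X Y : seq T) k : le a b ->
  path.merge le (a :: X) (take k (b :: Y)) = a :: path.merge le X (take k (b :: Y)).
Proof. by move=> lab; case: k => [|k] /=; [case: X | rewrite lab]. Qed.

Lemma merge_take_consr a b (X Y : seq T) j : ~~ le a b ->
  path.merge le (take j (a :: X)) (b :: Y) = b :: path.merge le (take j (a :: X)) Y.
Proof. by case: j => [|j] //= /negbTE ->. Qed.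

Lemma corank_cond1_consl a b (A B : seq T) j k :
  le a b -> sorted le (b :: B) ->
  corank_cond1 le A (b :: B) j k -> corank_cond1 le (a :: A) (b :: B) j.+1 k.
Proof.
move=> lab sB c1; right => x y /=.
case: j c1 => [|j] /= c1; last by case: c1 => // c1; apply: c1.
move=> [<-] By; apply: le_trans lab _.
exact: (sorted_onth_le sB (leq0n k) erefl By).
Qed.

Lemma corank_cond2_consr a b (A B : seq T) j k :
  ~~ le a b -> sorted le (a :: A) ->
  corank_cond2 le (a :: A) B j k -> corank_cond2 le (a :: A) (b :: B) j k.+1.
Proof.
move=> nlab sA c2; right => y x /=.
case: k c2 => [|k] /= c2; last by case: c2 => // c2; apply: c2.
move=> [<-] Ax; apply: contra nlab; apply: le_trans.
exact: (sorted_onth_le sA (leq0n j) erefl Ax).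
Qed.

Definition is_corank (A B : seq T) i j k :=
  [/\ j <= size A, k <= size B, j + k = i,
      corank_cond1 le A B j k & corank_cond2 le A B j k].

Lemma corank_exists i (A B : seq T) : sorted le A -> sorted le B ->
  i <= size A + size B ->
  exists j k, is_corank A B i j k /\
    path.merge le (take j A) (take k B) = take i (path.merge le A B).
Proof.
elim: i A B => [|i IH] A B sA sB.
  by exists 0, 0; rewrite !take0; do 2!split => //; left.
case: A sA => [|a A] sA; first by exists 0, i.+1; do 2!split => //; [left | right].
case: B sB => [|b B] sB.
  by rewrite addn0 => ?; exists i.+1, 0; do 2!split; rewrite ?addn0 //=; [right | left].
rewrite /= addSn ltnS => ltiAB; have [lab|nlab] := boolP (le a b).
- have [j [k [[jA kB jki c1 c2] mjk]]] := IH A (b :: B) (path_sorted sA) sB ltiAB.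
  exists j.+1, k; split.
    by split; rewrite ?addSn ?jki //; apply: corank_cond1_consl.
  by rewrite [take j.+1 _]/= merge_take_consl // mjk.
- have ltiAB' : i <= size (a :: A) + size B by rewrite /= addSn -addnS.
  have [j [k [[jA kB jki c1 c2] mjk]]] := IH (a :: A) B sA (path_sorted sB) ltiAB'.
  exists j, k.+1; split.
    by split; rewrite ?addnS ?jki //; apply: corank_cond2_consr.
  by rewrite [take k.+1 _]/= merge_take_consr // mjk.
Qed.

Lemma corank_cond2_cond1_leq {A B : seq T} {j k j' k'} :
  sorted le A -> sorted le B -> j' <= size A -> k <= size B ->
  j + k = j' + k' ->
  corank_cond2 le A B j k -> corank_cond1 le A B j' k' -> j' <= j.
Proof.
move=> sA sB j'A kB jk [k0|c2] [j'0|c1]; rewrite leqNgt; apply/negP => ltjj'; try lia.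
have [x Ax] := @onth_lt_size _ A j ltac:(lia).
have [x' Ax'] := @onth_lt_size _ A j'.-1 ltac:(lia).
have [y By] := @onth_lt_size _ B k.-1 ltac:(lia).
have [y' By'] := @onth_lt_size _ B k' ltac:(lia).
have := c2 _ _ By Ax; apply/negP/negPn.
apply: le_trans (sorted_onth_le sA _ Ax Ax') _; first lia.
apply: le_trans (c1 _ _ Ax' By') (sorted_onth_le sB _ By' By); lia.
Qed.

Lemma corank_unique {A B : seq T} {i j k j' k'} :
  sorted le A -> sorted le B ->
  is_corank A B i j k -> is_corank A B i j' k' -> j' = j /\ k' = k.
Proof.
move=> sA sB [jA kB <- c1 c2] [j'A k'B jk' c1' c2'].
have eq_j : j' = j.
  by apply/anti_leq; rewrite (corank_cond2_cond1_leq sA sB j'A kB _ c2 c1')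
    ?(corank_cond2_cond1_leq sA sB jA k'B _ c2' c1).
by split=> //; lia.
Qed.

End CoRanks.

Theorem lemma1 (T : Type) (le : rel T)
  (le_total : total le) (le_trans : transitive le)
  (A B : seq T) (sA : sorted le A) (sB : sorted le B) (i : nat) :
  i < size A + size B ->
  exists j k,
    j <= size A /\ k <= size B /\ j + k = i /\
        corank_cond1 le A B j k /\ corank_cond2 le A B j k /\
        (forall j' k', j' <= size A -> k' <= size B -> j' + k' = i ->
            corank_cond1 le A B j' k' -> corank_cond2 le A B j' k' ->
            j' = j /\ k' = k) /\
        stable_merge le (take j A) (take k B) = take i (stable_merge le A B).
Proof.
move=> /ltnW ltiAB.
have [j [k [[jA kB jki c1 c2] mjk]]] := corank_exists le_total le_trans i A B sA sB ltiAB.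
exists j, k; do 6!split => //.
move=> j' k' j'A k'B jki' c1' c2'.
exact: (corank_unique le_total le_trans sA sB
          (And5 jA kB jki c1 c2) (And5 j'A k'B jki' c1' c2')).
Qed.
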